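(* Let $n\ge 1$, $\theta^*\in\mathbb{R}^n$, and let $\phi:\mathbb{R}_{\ge0}\to\mathbb{R}^n$ be piecewise continuous and persistently exciting: there exist $M>0$, $T>0$, $\delta>0$ with $|\phi(t)|\le M$ for all $t\ge0$ and $\int_t^{t+T}\phi(s)\phi^T(s)\,ds\ge \delta I_n$ for all $t\ge 0$. Let $\beta,\gamma,\mu>0$ with $\beta\ge 2\gamma/\mu$, and set $\mathcal{N}_t:=1+\mu\,\phi^T(t)\phi(t)$. Consider the system in $x=(\theta,\vartheta)\in\mathbb{R}^n\times\mathbb{R}^n$ $$\dot\theta=-\beta(\theta-\vartheta),\qquad \dot\vartheta=-\frac{\gamma}{\mathcal{N}_t}\,\phi(t)\phi^T(t)(\theta-\theta^* ).$$ Then the point $(\theta^*,\theta^* )$ is uniformly globally asymptotically stable for this system. *)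

(* Vectors of R^n are represented as functions  nat -> R  whose components
   of index >= n are ignored (every definition only looks at indices < n). *)
From Stdlib Require Import Reals List.
From Coquelicot Require Import Coquelicot.
Open Scope R_scope.

Fixpoint dotn (n : nat) (u v : nat -> R) : R :=
  match n with
  | O => 0
  | S k => dotn k u v + u k * v k
  end.

Definition normn (n : nat) (v : nat -> R) : R := sqrt (dotn n v v).

Definition piecewise_continuous (n : nat) (phi : R -> nat -> R) : Prop :=
  forall a b : R, 0 <= a -> a <= b ->
  exists D : list R,
  forall i : nat, (i < n)%nat ->
  forall t : R, a <= t <= b ->
    (a < t < b -> ~ In t D -> continuous (fun s => phi s i) t) /\
    (t < b -> exists l : R, filterlim (fun s => phi s i) (at_right t) (locally l)) /\
    (a < t -> exists l : R, filterlim (fun s => phi s i) (at_left t) (locally l)).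

(* Persistency of excitation with constants M, T, delta:
   |phi(t)| <= M for all t >= 0 and
   int_t^{t+T} phi(s) phi(s)^T ds >= delta I_n for all t >= 0, the matrix
   inequality being the Loewner order, i.e. for every v in R^n
   v^T (int_t^{t+T} phi phi^T ds) v = int_t^{t+T} (phi(s)^T v)^2 ds >= delta |v|^2. *)
Definition persistently_exciting (n : nat) (phi : R -> nat -> R)
  (M T delta : R) : Prop :=
  0 < M /\ 0 < T /\ 0 < delta /\
  (forall t, 0 <= t -> normn n (phi t) <= M) /\
  (forall t, 0 <= t -> forall v : nat -> R,
     RInt (fun s => (dotn n (phi s) v) ^ 2) t (t + T) >= delta * dotn n v v).

Definition Nt (n : nat) (mu : R) (phi : R -> nat -> R) (t : R) : R :=
  1 + mu * dotn n (phi t) (phi t).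

(* x = (theta, vartheta) : [t0, +oo) -> R^n x R^n is a (Caratheodory)
   solution starting at time t0 of
     theta'    = - beta (theta - vartheta)
     vartheta' = - gamma / N_t * phi(t) phi(t)^T (theta - theta_star),
   i.e. it satisfies the integral form of the ODE on [t0, t] for all t >= t0
   (the right-hand side is only piecewise continuous in t). *)
Definition is_solution (n : nat) (beta gamma mu : R) (phi : R -> nat -> R)
  (theta_star : nat -> R) (t0 : R) (x : R -> (nat -> R) * (nat -> R)) : Prop :=
  forall t : R, t0 <= t -> forall i : nat, (i < n)%nat ->
    is_RInt (fun s => - beta * (fst (x s) i - snd (x s) i)) t0 t
            (fst (x t) i - fst (x t0) i) /\
    is_RInt (fun s => - (gamma / Nt n mu phi s) * phi s i *
                      dotn n (phi s) (fun j => fst (x s) j - theta_star j)) t0 t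
            (snd (x t) i - snd (x t0) i).

(* Uniform global asymptotic stability (Khalil, Def. 4.4) of an equilibrium,
   for a time-varying system on t >= 0 whose solutions from initial time t0
   are described by sol t0, d being the distance to the equilibrium:
   uniformly stable, uniformly globally bounded, uniformly globally attractive. *)
Definition UGAS {X : Type} (sol : R -> (R -> X) -> Prop) (d : X -> R) : Prop :=
  (forall eps, 0 < eps -> exists del, 0 < del /\
     forall t0 x, 0 <= t0 -> sol t0 x -> d (x t0) < del ->
       forall t, t0 <= t -> d (x t) < eps) /\
  (forall r, 0 < r -> exists c, 0 < c /\
     forall t0 x, 0 <= t0 -> sol t0 x -> d (x t0) < r ->
       forall t, t0 <= t -> d (x t) < c) /\
  (forall r eps, 0 < r -> 0 < eps -> exists Tt, 0 <= Tt /\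
     forall t0 x, 0 <= t0 -> sol t0 x -> d (x t0) < r ->
       forall t, t0 + Tt <= t -> d (x t) < eps).

Definition dist_eq (n : nat) (theta_star : nat -> R) (z : (nat -> R) * (nat -> R)) : R :=
  sqrt (dotn n (fun j => fst z j - theta_star j) (fun j => fst z j - theta_star j) +
        dotn n (fun j => snd z j - theta_star j) (fun j => snd z j - theta_star j)).

From Stdlib Require Import Reals Lra Psatz List.
From Coquelicot Require Import Coquelicot.
Open Scope R_scope.

(* Work in the error coordinates vartheta - theta_star and gap = theta - vartheta, so
   that theta - theta_star is their sum.  Along solutions the Lyapunov function
   V = |vartheta - theta_star|^2 + |gap|^2 satisfies
     V' <= - gamma/N_t (phi^T (theta - theta_star))^2 - 4 gamma/(mu N_t) |gap|^2,
   which is where beta >= 2 gamma/mu is used.  Hence V is nonincreasing, and the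
   decrease of V over a window [s, s + T] controls the drift of vartheta inside the
   window, then (by persistency of excitation) |vartheta(s) - theta_star|^2, and
   finally V(s + T) itself: V(s + T) <= C (V(s) - V(s + T)).  So V contracts by the
   factor C / (1 + C) over every window, and since V is equivalent to the squared
   distance to (theta_star, theta_star) this geometric decay gives UGAS. *)

Lemma dotn_ext n u u' v v' :
  (forall i, (i < n)%nat -> u i = u' i) -> (forall i, (i < n)%nat -> v i = v' i) ->
  dotn n u v = dotn n u' v'.
Proof.
  induction n as [|n IH]; intros Hu Hv; simpl; [reflexivity|].
  rewrite IH by (intros; apply Hu || apply Hv; lia).
  rewrite (Hu n), (Hv n) by lia. reflexivity.
Qed.

Lemma dotn_comm n u v : dotn n u v = dotn n v u.
Proof. induction n; simpl; [|rewrite IHn]; ring. Qed.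

Lemma dotn_scal_l n c u v : dotn n (fun i => c * u i) v = c * dotn n u v.
Proof. induction n; simpl; [|rewrite IHn]; ring. Qed.

Lemma dotn_scal_r n c u v : dotn n u (fun i => c * v i) = c * dotn n u v.
Proof. induction n; simpl; [|rewrite IHn]; ring. Qed.

Lemma dotn_minus_l n u u' v : dotn n (fun i => u i - u' i) v = dotn n u v - dotn n u' v.
Proof. induction n; simpl; [|rewrite IHn]; ring. Qed.

Lemma dotn_minus_r n u v v' : dotn n u (fun i => v i - v' i) = dotn n u v - dotn n u v'.
Proof. induction n; simpl; [|rewrite IHn]; ring. Qed.

Lemma dotn_0_l n v : dotn n (fun _ => 0) v = 0.
Proof. induction n; simpl; [|rewrite IHn]; ring. Qed.

Lemma dotn_ge0 n u : 0 <= dotn n u u.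
Proof. induction n; simpl; nra. Qed.

Lemma dotn_sq_plus_le n u v :
  dotn n (fun i => u i + v i) (fun i => u i + v i) <= 2 * dotn n u u + 2 * dotn n v v.
Proof. induction n; simpl; [lra|]. pose proof (pow2_ge_0 (u n - v n)). nra. Qed.

Lemma dotn_sq_minus_le n u v :
  dotn n (fun i => u i - v i) (fun i => u i - v i) <= 2 * dotn n u u + 2 * dotn n v v.
Proof. induction n; simpl; [lra|]. pose proof (pow2_ge_0 (u n + v n)). nra. Qed.

Lemma dotn_self_eq0 n u v : dotn n u u = 0 -> dotn n u v = 0.
Proof.
  induction n as [|n IH]; simpl; [reflexivity|]. intros H.
  pose proof (dotn_ge0 n u).
  assert (dotn n u u = 0 /\ u n = 0) as [Hn ->] by nra.
  rewrite IH by exact Hn. ring.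
Qed.

Lemma dotn_Cauchy_Schwarz n u v : (dotn n u v) ^ 2 <= dotn n u u * dotn n v v.
Proof.
  destruct (Req_dec (dotn n v v) 0) as [Hv|Hv].
  { rewrite dotn_comm, (dotn_self_eq0 n v u Hv), Hv. nra. }
  pose proof (dotn_ge0 n v) as Hv0.
  (* expand |u - l v|^2 >= 0 at the minimising l = <u,v> / |v|^2 *)
  pose proof (dotn_ge0 n (fun i => u i - dotn n u v / dotn n v v * v i)) as H.
  rewrite dotn_minus_l, !dotn_minus_r, !dotn_scal_l, !dotn_scal_r, (dotn_comm n v u) in H.
  revert H Hv Hv0. generalize (dotn n u u) (dotn n u v) (dotn n v v). intros uu uv vv H Hv Hv0.
  replace (uu - uv / vv * uv - (uv / vv * uv - uv / vv * (uv / vv * vv)))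
    with ((uu * vv - uv ^ 2) / vv) in H by (field; lra).
  apply Rmult_le_compat_r with (r := vv) in H; [|lra].
  replace ((uu * vv - uv ^ 2) / vv * vv) with (uu * vv - uv ^ 2) in H by (field; lra). lra.
Qed.

(** * Continuity relative to a closed interval *)

Definition continuous_Icc (F : R -> R) (a b t : R) :=
  filterlim F (within (fun y => a <= y <= b) (locally t)) (locally (F t)).

Lemma continuous_IccP F a b t :
  continuous_Icc F a b t <->
  forall eps, 0 < eps -> exists eta, 0 < eta /\
    forall y, a <= y <= b -> Rabs (y - t) < eta -> Rabs (F y - F t) < eps.
Proof.
  split.
  - intros H eps He.
    destruct (H _ (locally_ball (F t) (mkposreal eps He))) as [eta Heta].
    exists eta. split; [apply cond_pos|]. intros y Hy Hyt. exact (Heta y Hyt Hy).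
  - intros H P [eps HP].
    destruct (H eps (cond_pos eps)) as [eta [He H1]].
    exists (mkposreal eta He). intros y Hyt Hy. apply HP, H1; assumption.
Qed.

Lemma continuous_Icc_of_continuous F a b t : continuous F t -> continuous_Icc F a b t.
Proof.
  intros H. eapply filterlim_filter_le_1; [|exact H]. now apply filter_le_within.
Qed.

Lemma continuous_Icc_interior F a b t :
  a < t < b -> continuous_Icc F a b t -> continuous F t.
Proof.
  intros Ht H P [eps HP].
  destruct (proj1 (continuous_IccP F a b t) H eps (cond_pos eps)) as [eta [He H1]].
  assert (Hr : 0 < Rmin eta (Rmin (t - a) (b - t))) by (repeat apply Rmin_pos; lra).
  exists (mkposreal _ Hr). intros y Hy. apply HP.
  change (Rabs (y - t) < Rmin eta (Rmin (t - a) (b - t))) in Hy.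
  pose proof (Rmin_l eta (Rmin (t - a) (b - t))). pose proof (Rmin_r eta (Rmin (t - a) (b - t))).
  pose proof (Rmin_l (t - a) (b - t)). pose proof (Rmin_r (t - a) (b - t)).
  apply H1; [|lra]. apply Rabs_def2 in Hy. lra.
Qed.

Lemma continuous_Icc_subinterval F a b a' b' t :
  a <= a' -> b' <= b -> continuous_Icc F a b t -> continuous_Icc F a' b' t.
Proof.
  intros Ha Hb H. apply continuous_IccP. intros eps He.
  destruct (proj1 (continuous_IccP F a b t) H eps He) as [eta [Hp H1]].
  exists eta. split; [exact Hp|]. intros y Hy. apply H1. lra.
Qed.

Lemma continuous_Icc_comp (g : R -> R) F a b t :
  continuous g (F t) -> continuous_Icc F a b t -> continuous_Icc (fun y => g (F y)) a b t.
Proof. intros Hg HF. eapply filterlim_comp; [exact HF|exact Hg]. Qed.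

Lemma continuous_Icc_const c a b t : continuous_Icc (fun _ => c) a b t.
Proof. apply continuous_Icc_of_continuous, continuous_const. Qed.

Lemma continuous_Icc_id a b t : continuous_Icc (fun y => y) a b t.
Proof. apply continuous_Icc_of_continuous, continuous_id. Qed.

Lemma continuous_Icc_plus F G a b t :
  continuous_Icc F a b t -> continuous_Icc G a b t -> continuous_Icc (fun y => F y + G y) a b t.
Proof.
  intros HF HG. eapply filterlim_comp_2; [exact HF|exact HG|apply (filterlim_plus (K := R_AbsRing) (F t) (G t))].
Qed.

Lemma continuous_Icc_mult F G a b t :
  continuous_Icc F a b t -> continuous_Icc G a b t -> continuous_Icc (fun y => F y * G y) a b t.
Proof.
  intros HF HG. eapply filterlim_comp_2; [exact HF|exact HG|apply (filterlim_mult (K := R_AbsRing) (F t) (G t))].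
Qed.

Lemma continuous_Icc_opp F a b t :
  continuous_Icc F a b t -> continuous_Icc (fun y => - F y) a b t.
Proof. intros H. eapply filterlim_comp; [exact H|apply (filterlim_opp (V := R_NormedModule) (F t))]. Qed.

Lemma continuous_Icc_minus F G a b t :
  continuous_Icc F a b t -> continuous_Icc G a b t -> continuous_Icc (fun y => F y - G y) a b t.
Proof. intros. apply continuous_Icc_plus, continuous_Icc_opp; assumption. Qed.

Lemma continuous_Icc_dotn n u v a b t :
  (forall i, (i < n)%nat -> continuous_Icc (fun y => u y i) a b t) ->
  (forall i, (i < n)%nat -> continuous_Icc (fun y => v y i) a b t) ->
  continuous_Icc (fun y => dotn n (u y) (v y)) a b t.
Proof.
  induction n as [|n IH]; intros Hu Hv; simpl; [apply continuous_Icc_const|].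
  apply continuous_Icc_plus; [apply IH; intros; apply Hu || apply Hv; lia|].
  apply continuous_Icc_mult; [apply Hu|apply Hv]; lia.
Qed.

(** * Monotonicity, primitives and piecewise continuous integrands *)

Lemma deriv_nonpos_le_Ioo F a b :
  (forall t, a < t < b -> exists l, is_derive F t l /\ l <= 0) ->
  forall a' b', a < a' -> a' <= b' -> b' < b -> F b' <= F a'.
Proof.
  intros Hd a' b' Ha Hab Hb.
  destruct (MVT_gen F a' b' (Derive F)) as [c [Hc HF]];
    rewrite ?Rmin_left, ?Rmax_right in * by lra.
  - intros y Hy. destruct (Hd y ltac:(lra)) as [l [Hl _]].
    rewrite (is_derive_unique _ _ _ Hl). exact Hl.
  - intros y Hy. destruct (Hd y ltac:(lra)) as [l [Hl _]].
    apply continuity_pt_filterlim, (ex_derive_continuous (V := R_NormedModule)). now exists l.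
  - destruct (Hd c ltac:(lra)) as [l [Hl Hl0]].
    rewrite (is_derive_unique _ _ _ Hl) in HF. nra.
Qed.

Lemma deriv_nonpos_le F a b : a <= b ->
  (forall t, a <= t <= b -> continuous_Icc F a b t) ->
  (forall t, a < t < b -> exists l, is_derive F t l /\ l <= 0) -> F b <= F a.
Proof.
  intros Hab Hc Hd. destruct (Req_dec a b) as [<-|Hne]; [lra|].
  apply Rle_plus_epsilon. intros eps He.
  destruct (proj1 (continuous_IccP F a b a) (Hc a ltac:(lra)) (eps / 2) ltac:(lra)) as [e1 [P1 H1]].
  destruct (proj1 (continuous_IccP F a b b) (Hc b ltac:(lra)) (eps / 2) ltac:(lra)) as [e2 [P2 H2]].
  set (a' := a + Rmin e1 (b - a) / 3). set (b' := b - Rmin e2 (b - a) / 3).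
  pose proof (Rmin_l e1 (b - a)). pose proof (Rmin_r e1 (b - a)).
  pose proof (Rmin_l e2 (b - a)). pose proof (Rmin_r e2 (b - a)).
  assert (0 < Rmin e1 (b - a)) by (apply Rmin_pos; lra).
  assert (0 < Rmin e2 (b - a)) by (apply Rmin_pos; lra).
  assert (Hnear_a := H1 a' ltac:(unfold a'; lra) ltac:(unfold a'; rewrite Rabs_right; lra)).
  assert (Hnear_b := H2 b' ltac:(unfold b'; lra) ltac:(unfold b'; rewrite Rabs_left; lra)).
  assert (Hinner := deriv_nonpos_le_Ioo F a b Hd a' b' ltac:(unfold a'; lra)
                  ltac:(unfold a', b'; lra) ltac:(unfold b'; lra)).
  apply Rabs_def2 in Hnear_a. apply Rabs_def2 in Hnear_b. lra.
Qed.

Lemma deriv_nonpos_except_le F a b (D : list R) : a <= b ->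
  (forall t, a <= t <= b -> continuous_Icc F a b t) ->
  (forall t, a < t < b -> ~ In t D -> exists l, is_derive F t l /\ l <= 0) -> F b <= F a.
Proof.
  revert a b. induction D as [|d D IH]; intros a b Hab Hc Hd.
  { apply deriv_nonpos_le; auto. }
  assert (HD : forall a' b', a <= a' -> b' <= b -> a' <= b' -> ~ (a' < d < b') -> F b' <= F a').
  { intros a' b' Ha Hb Hab' Hnd. apply IH; [exact Hab'| |].
    - intros t Ht. apply continuous_Icc_subinterval with a b; try lra. apply Hc; lra.
    - intros t Ht Hn. apply Hd; [lra|]. intros [E|E]; [subst; lra|auto]. }
  destruct (Rlt_dec a d) as [H1|H1]; [destruct (Rlt_dec d b) as [H2|H2]|].
  - apply Rle_trans with (F d); apply HD; lra.
  - apply HD; lra.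
  - apply HD; lra.
Qed.

Definition piecewise_continuous_on (h : R -> R) (a b : R) (D : list R) :=
  forall t, a <= t <= b ->
    (a < t < b -> ~ In t D -> continuous h t) /\
    (t < b -> exists l, filterlim h (at_right t) (locally l)) /\
    (a < t -> exists l, filterlim h (at_left t) (locally l)).

Lemma continuous_glue_at_right (h g : R -> R) a b la :
  a < b -> filterlim h (at_right a) (locally la) ->
  (forall y, y <= a -> g y = la) -> (forall y, a < y < b -> g y = h y) -> continuous g a.
Proof.
  intros Hab Hh Hl Hr P [eps HP].
  destruct (Hh _ (locally_ball la eps)) as [eta Heta].
  assert (Hp : 0 < Rmin eta (b - a)) by (apply Rmin_pos; [apply cond_pos|lra]).
  exists (mkposreal _ Hp). intros y Hy. apply HP.
  change (Rabs (y - a) < Rmin eta (b - a)) in Hy.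
  pose proof (Rmin_l eta (b - a)). pose proof (Rmin_r eta (b - a)).
  rewrite (Hl a) by lra. destruct (Rle_dec y a) as [Hya|Hya].
  - rewrite (Hl y Hya). apply ball_center.
  - rewrite Hr by (apply Rabs_def2 in Hy; lra). apply Heta; [|lra].
    change (Rabs (y - a) < eta). lra.
Qed.

Lemma continuous_glue_at_left (h g : R -> R) a b lb :
  a < b -> filterlim h (at_left b) (locally lb) ->
  (forall y, b <= y -> g y = lb) -> (forall y, a < y < b -> g y = h y) -> continuous g b.
Proof.
  intros Hab Hh Hl Hr P [eps HP].
  destruct (Hh _ (locally_ball lb eps)) as [eta Heta].
  assert (Hp : 0 < Rmin eta (b - a)) by (apply Rmin_pos; [apply cond_pos|lra]).
  exists (mkposreal _ Hp). intros y Hy. apply HP.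
  change (Rabs (y - b) < Rmin eta (b - a)) in Hy.
  pose proof (Rmin_l eta (b - a)). pose proof (Rmin_r eta (b - a)).
  rewrite (Hl b) by lra. destruct (Rle_dec b y) as [Hyb|Hyb].
  - rewrite (Hl y Hyb). apply ball_center.
  - rewrite Hr by (apply Rabs_def2 in Hy; lra). apply Heta; [|lra].
    change (Rabs (y - b) < eta). lra.
Qed.

Lemma ex_RInt_continuous_Ioo h a b : a < b -> piecewise_continuous_on h a b nil -> ex_RInt h a b.
Proof.
  intros Hab H.
  destruct (H a ltac:(lra)) as [_ [[la Ha] _]]; [lra|].
  destruct (H b ltac:(lra)) as [_ [_ [lb Hb]]]; [lra|].
  set (g y := if Rle_dec y a then la else if Rle_dec b y then lb else h y).
  assert (Hga : forall y, y <= a -> g y = la) by (intros y Hy; unfold g; destruct Rle_dec; lra).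
  assert (Hgb : forall y, b <= y -> g y = lb).
  { intros y Hy; unfold g; destruct (Rle_dec y a); [lra|]. destruct Rle_dec; lra. }
  assert (Hgh : forall y, a < y < b -> g y = h y).
  { intros y Hy; unfold g; do 2 (destruct Rle_dec; [lra|]). reflexivity. }
  apply (ex_RInt_ext (V := R_NormedModule) g).
  { intros y Hy. rewrite Rmin_left, Rmax_right in Hy by lra. auto. }
  apply (ex_RInt_continuous (V := R_CompleteNormedModule)). intros z Hz.
  rewrite Rmin_left, Rmax_right in Hz by lra.
  destruct (Req_dec z a) as [->|Ea]; [exact (continuous_glue_at_right h g a b la Hab Ha Hga Hgh)|].
  destruct (Req_dec z b) as [->|Eb]; [exact (continuous_glue_at_left h g a b lb Hab Hb Hgb Hgh)|].
  apply continuous_ext_loc with h.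
  - assert (Hp : 0 < Rmin (z - a) (b - z)) by (apply Rmin_pos; lra).
    exists (mkposreal _ Hp). intros y Hy. change (Rabs (y - z) < Rmin (z - a) (b - z)) in Hy.
    pose proof (Rmin_l (z - a) (b - z)). pose proof (Rmin_r (z - a) (b - z)).
    apply Rabs_def2 in Hy. symmetry. apply Hgh. lra.
  - apply (H z ltac:(lra)); [lra|auto].
Qed.

Lemma ex_RInt_piecewise_continuous h a b D :
  a <= b -> piecewise_continuous_on h a b D -> ex_RInt h a b.
Proof.
  revert a b. induction D as [|d D IH]; intros a b Hab H.
  { destruct (Req_dec a b) as [<-|]; [apply ex_RInt_point|apply ex_RInt_continuous_Ioo; auto; lra]. }
  assert (HD : forall a' b', a <= a' -> b' <= b -> a' <= b' -> ~ (a' < d < b') -> ex_RInt h a' b').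
  { intros a' b' Ha Hb Hab' Hnd. apply IH; [exact Hab'|]. intros t Ht.
    destruct (H t ltac:(lra)) as [Hc [Hr Hl]]. repeat split.
    - intros Ht' Hn. apply Hc; [lra|]. intros [E|E]; [subst; lra|auto].
    - intros; apply Hr; lra.
    - intros; apply Hl; lra. }
  destruct (Rlt_dec a d) as [H1|H1]; [destruct (Rlt_dec d b) as [H2|H2]|].
  - apply ex_RInt_Chasles_0 with d; [lra|apply HD|apply HD]; lra.
  - apply HD; lra.
  - apply HD; lra.
Qed.

Lemma continuous_Icc_primitive f F a b :
  (forall t, a <= t <= b -> is_RInt f a t (F t - F a)) ->
  forall t, a <= t <= b -> continuous_Icc F a b t.
Proof.
  intros HF t Ht.
  destruct (ex_RInt_ub f a b (ex_intro _ _ (HF b ltac:(lra)))) as [B HB].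
  rewrite Rmin_left, Rmax_right in HB by lra.
  apply continuous_IccP. intros eps He.
  assert (HB1 : 0 < Rabs B + 1) by (pose proof (Rabs_pos B); lra).
  exists (eps / (Rabs B + 1)). split; [apply Rdiv_lt_0_compat; lra|]. intros y Hy Hyt.
  assert (Hty := is_RInt_Chasles f t a y _ _ (is_RInt_swap _ _ _ _ (HF t Ht)) (HF y Hy)).
  assert (K : norm (plus (opp (F t - F a)) (F y - F a)) <= Rabs (y - t) * B).
  { apply (norm_RInt_le_const_abs f t y); [|exact Hty]. intros w Hw. apply HB. split.
    - apply Rle_trans with (Rmin t y); [apply Rmin_glb|]; lra.
    - apply Rle_trans with (Rmax t y); [|apply Rmax_lub]; lra. }
  change (Rabs (- (F t - F a) + (F y - F a)) <= Rabs (y - t) * B) in K.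
  replace (- (F t - F a) + (F y - F a)) with (F y - F t) in K by ring.
  apply Rmult_lt_compat_r with (r := Rabs B + 1) in Hyt; [|lra].
  replace (eps / (Rabs B + 1) * (Rabs B + 1)) with eps in Hyt by (field; lra).
  pose proof (Rle_abs B). pose proof (Rabs_pos (y - t)). nra.
Qed.

Lemma is_derive_primitive f F a b tau :
  (forall t, a <= t <= b -> is_RInt f a t (F t - F a)) -> a < tau < b -> continuous f tau ->
  is_derive F tau (f tau).
Proof.
  intros HF Htau Hc.
  assert (HD : is_derive (fun y => F y - F a) tau (f tau)).
  { apply is_derive_RInt with a; [|exact Hc].
    assert (Hp : 0 < Rmin (tau - a) (b - tau)) by (apply Rmin_pos; lra).
    exists (mkposreal _ Hp). intros y Hy. change (Rabs (y - tau) < Rmin (tau - a) (b - tau)) in Hy.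
    pose proof (Rmin_l (tau - a) (b - tau)). pose proof (Rmin_r (tau - a) (b - tau)).
    apply Rabs_def2 in Hy. apply HF. lra. }
  apply (is_derive_ext (fun y => (F y - F a) + F a)); [intros y; change (F y - F a + F a = F y); ring|].
  replace (f tau) with (f tau + 0) by ring.
  apply (is_derive_plus (fun y => F y - F a)); [exact HD|exact (is_derive_const (F a) tau)].
Qed.

Lemma is_RInt_primitive h a b :
  a <= b -> ex_RInt h a b -> forall t, a <= t <= b -> is_RInt h a t (RInt h a t - RInt h a a).
Proof.
  intros Hab Hi t Ht. rewrite RInt_point. change (is_RInt h a t (RInt h a t - 0)).
  rewrite Rminus_0_r. apply (RInt_correct (V := R_CompleteNormedModule)).
  now apply ex_RInt_Chasles_1 with b.
Qed.

Lemma is_derive_eq (f : R -> R) x l l' : is_derive f x l -> l = l' -> is_derive f x l'.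
Proof. now intros H <-. Qed.

Lemma is_derive_dotn n (du dv : nat -> R) (u v : R -> nat -> R) t :
  (forall i, (i < n)%nat -> is_derive (fun s => u s i) t (du i)) ->
  (forall i, (i < n)%nat -> is_derive (fun s => v s i) t (dv i)) ->
  is_derive (fun s => dotn n (u s) (v s)) t (dotn n du (v t) + dotn n (u t) dv).
Proof.
  induction n as [|n IH]; intros Hu Hv; simpl.
  - eapply is_derive_eq; [exact (is_derive_const 0 t)|]. change (0 = 0 + 0). ring.
  - eapply is_derive_eq.
    + apply (is_derive_plus (fun s => dotn n (u s) (v s)) (fun s => u s n * v s n)).
      * apply IH; intros; apply Hu || apply Hv; lia.
      * apply (is_derive_mult (fun s => u s n) (fun s => v s n)); [apply Hu|apply Hv|]; try lia.
        intros; apply Rmult_comm.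
    + cbv [plus mult scal]; simpl; ring.
Qed.

Lemma finite_choice n (P : nat -> R -> Prop) :
  (forall i, (i < n)%nat -> exists l, P i l) ->
  exists L : nat -> R, forall i, (i < n)%nat -> P i (L i).
Proof.
  induction n as [|n IH]; intros H; [exists (fun _ => 0); intros; lia|].
  destruct IH as [L HL]; [intros; apply H; lia|].
  destruct (H n ltac:(lia)) as [l Hl].
  exists (fun i => if Nat.eq_dec i n then l else L i).
  intros i Hi. destruct (Nat.eq_dec i n) as [->|]; [exact Hl|apply HL; lia].
Qed.

Lemma filterlim_dotn_l {F : (R -> Prop) -> Prop} {FF : Filter F} n u v L :
  (forall i, (i < n)%nat -> filterlim (fun s => u s i) F (locally (L i))) ->
  filterlim (fun s => dotn n (u s) v) F (locally (dotn n L v)).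
Proof.
  induction n as [|n IH]; intros H; simpl; [apply filterlim_const|].
  eapply filterlim_comp_2;
    [apply IH; intros; apply H; lia| |apply (filterlim_plus (K := R_AbsRing) _ (L n * v n))].
  eapply filterlim_comp_2;
    [apply H; lia|apply filterlim_const|apply (filterlim_mult (K := R_AbsRing) (L n) (v n))].
Qed.

Lemma continuous_sqr (z : R) : continuous (fun w : R => w ^ 2) z.
Proof. apply (ex_derive_continuous (V := R_NormedModule)). auto_derive. auto. Qed.

Lemma piecewise_continuous_sqr_dot n phi v a b :
  piecewise_continuous n phi -> 0 <= a -> a <= b ->
  exists D, piecewise_continuous_on (fun y => (dotn n (phi y) v) ^ 2) a b D /\
  forall tau, a < tau < b -> ~ In tau D ->
    forall j, (j < n)%nat -> continuous (fun s => phi s j) tau.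
Proof.
  intros Hpc Ha Hab. destruct (Hpc a b Ha Hab) as [D HD]. exists D. split.
  - intros t Ht. repeat split.
    + intros Ht' Hn. apply (continuous_Icc_interior _ (t - 1) (t + 1)); [lra|].
      apply (continuous_Icc_comp (fun w => w ^ 2) (fun y => dotn n (phi y) v)); [apply continuous_sqr|].
      apply continuous_Icc_dotn; intros j Hj; [|apply continuous_Icc_const].
      apply continuous_Icc_of_continuous, (HD j Hj t Ht); auto.
    + intros Htb.
      destruct (finite_choice n (fun j l => filterlim (fun s => phi s j) (at_right t) (locally l)))
        as [L HL]; [intros j Hj; apply (HD j Hj t Ht); auto|].
      exists ((dotn n L v) ^ 2).
      apply (filterlim_comp _ _ _ (fun y => dotn n (phi y) v) (fun w => w ^ 2) _ (locally (dotn n L v)));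
        [apply filterlim_dotn_l, HL|apply continuous_sqr].
    + intros Hat.
      destruct (finite_choice n (fun j l => filterlim (fun s => phi s j) (at_left t) (locally l)))
        as [L HL]; [intros j Hj; apply (HD j Hj t Ht); auto|].
      exists ((dotn n L v) ^ 2).
      apply (filterlim_comp _ _ _ (fun y => dotn n (phi y) v) (fun w => w ^ 2) _ (locally (dotn n L v)));
        [apply filterlim_dotn_l, HL|apply continuous_sqr].
  - intros tau Ht Hn j Hj. apply (HD j Hj tau ltac:(lra)); auto.
Qed.

Lemma exp_le_compat x y : x <= y -> exp x <= exp y.
Proof. intros [H|<-]; [left; apply exp_increasing, H|right; reflexivity]. Qed.

Lemma exp_opp_ge_third u : u <= 1 -> / 3 <= exp (- u).
Proof.
  intros H. rewrite exp_Ropp. apply Rinv_le_contravar; [apply exp_pos|].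
  apply Rle_trans with (exp 1); [apply exp_le_compat; lra|apply exp_le_3].
Qed.

(** * Scalar inequalities behind the Lyapunov estimates *)

Lemma normalized_dissipation_le g m be P E a b :
  0 < g -> 0 < m -> be >= 2 * g / m -> 0 <= P -> 0 <= E -> b ^ 2 <= P * E ->
  -2 * (g / (1 + m * P)) * a ^ 2 + 4 * (g / (1 + m * P)) * a * b - 2 * be * E
  <= - (g / (1 + m * P)) * a ^ 2 - (4 * g / (m * (1 + m * P))) * E.
Proof.
  intros Hg Hm Hb HP HE Hab.
  (* complete the square in [a], then use [4 g P / N + 4 g / (m N) = 4 g / m <= 2 be] *)
  assert (HN : 0 < 1 + m * P) by nra.
  set (N := 1 + m * P) in *.
  set (c := g / N).
  assert (Hc : 0 < c) by (unfold c; apply Rdiv_lt_0_compat; lra).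
  assert (Hsquare : -2 * c * a ^ 2 + 4 * c * a * b <= - c * a ^ 2 + 4 * c * (P * E)).
  { assert (0 <= c * (a - 2 * b) ^ 2) by (apply Rmult_le_pos; [lra|apply pow2_ge_0]).
    assert (0 <= c * (P * E - b ^ 2)) by (apply Rmult_le_pos; lra).
    replace (-2 * c * a ^ 2 + 4 * c * a * b) with (- c * a ^ 2 - c * (a - 2 * b) ^ 2 + 4 * c * b ^ 2) by ring.
    lra. }
  assert (Hgain : 4 * c * P + 4 * g / (m * N) = 4 * g / m).
  { unfold c, N. field. unfold N in HN. split; lra. }
  assert (Hgap : 4 * c * (P * E) - 2 * be * E <= - (4 * g / (m * N)) * E).
  { assert ((4 * c * P + 4 * g / (m * N) - 2 * be) * E <= 0).
    { apply Rmult_le_0_r; [|lra]. rewrite Hgain.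
      replace (4 * g / m) with (2 * (2 * g / m)) by (field; lra). lra. }
    nra. }
  fold c. lra.
Qed.

Lemma drift_rate_nonpos ex Z y P M T c g a U' :
  0 < ex <= 1 -> 0 <= Z -> y ^ 2 <= P * Z -> 0 <= P <= M ^ 2 ->
  0 < M -> 0 < T -> 0 < c <= g -> U' <= - c * a ^ 2 ->
  ex * (- (1 / T) * Z - 2 * c * a * y) + g * M ^ 2 * T * U' <= 0.
Proof.
  intros Hex HZ Hy HP HM HT Hc HU.
  (* Young: [- 2 c a y <= y^2 / (M^2 T) + M^2 T c^2 a^2], with [y^2 <= M^2 Z] *)
  assert (HMT : 0 < M ^ 2 * T) by (apply Rmult_lt_0_compat; [apply pow_lt|]; lra).
  assert (Hsq : - 2 * c * a * y * (M ^ 2 * T) <= y ^ 2 + (M ^ 2 * T) ^ 2 * c ^ 2 * a ^ 2).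
  { pose proof (pow2_ge_0 (y + M ^ 2 * T * c * a)). nra. }
  assert (Hy2 : y ^ 2 <= M ^ 2 * Z).
  { apply Rle_trans with (P * Z); auto. apply Rmult_le_compat_r; lra. }
  assert (Hyoung : - 2 * c * a * y <= Z / T + M ^ 2 * T * c ^ 2 * a ^ 2).
  { apply Rmult_le_reg_r with (M ^ 2 * T); auto.
    replace ((Z / T + M ^ 2 * T * c ^ 2 * a ^ 2) * (M ^ 2 * T)) with (M ^ 2 * Z + (M ^ 2 * T) ^ 2 * c ^ 2 * a ^ 2)
      by (field; lra). lra. }
  assert (Hlin : - (1 / T) * Z - 2 * c * a * y <= M ^ 2 * T * c ^ 2 * a ^ 2).
  { replace (- (1 / T) * Z) with (- (Z / T)) by (field; lra). lra. }
  assert (Hpos : 0 <= M ^ 2 * T * c ^ 2 * a ^ 2).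
  { apply Rmult_le_pos; [apply Rmult_le_pos|apply pow2_ge_0]; [lra|apply pow2_ge_0]. }
  assert (Hweight : ex * (- (1 / T) * Z - 2 * c * a * y) <= M ^ 2 * T * c ^ 2 * a ^ 2).
  { destruct (Rle_dec 0 (- (1 / T) * Z - 2 * c * a * y)).
    - apply Rle_trans with (1 * (- (1 / T) * Z - 2 * c * a * y)); [|lra].
      apply Rmult_le_compat_r; lra.
    - assert (ex * (- (1 / T) * Z - 2 * c * a * y) <= 0) by nra. lra. }
  assert (Hcg : M ^ 2 * T * c ^ 2 * a ^ 2 <= g * M ^ 2 * T * (c * a ^ 2)).
  { replace (M ^ 2 * T * c ^ 2 * a ^ 2) with (M ^ 2 * T * (c * a ^ 2) * c) by ring.
    replace (g * M ^ 2 * T * (c * a ^ 2)) with (M ^ 2 * T * (c * a ^ 2) * g) by ring.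
    apply Rmult_le_compat_l; [|lra]. apply Rmult_le_pos; [lra|]. apply Rmult_le_pos; [lra|apply pow2_ge_0]. }
  assert (HU' : g * M ^ 2 * T * U' <= g * M ^ 2 * T * (- c * a ^ 2)).
  { apply Rmult_le_compat_l; [|lra]. apply Rmult_le_pos; [|lra]. apply Rmult_le_pos; [lra|apply pow2_ge_0]. }
  lra.
Qed.

Lemma excitation_rate_nonpos g m M T Dl P E Zz a b y U' :
  0 < g -> 0 < m -> 0 < M -> 0 < T -> 0 <= Dl -> 0 <= P <= M ^ 2 -> 0 <= E -> 0 <= Zz -> y ^ 2 <= P * Zz -> b ^ 2 <= P * E ->
  Zz <= 3 * g * M ^ 2 * T * Dl ->
  U' <= - (g / (1 + m * P)) * a ^ 2 - (4 * g / (m * (1 + m * P))) * E ->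
  (a - b - y) ^ 2 + 3 * (1 + m * M ^ 2) ^ 2 / g * U' - 9 * g * M ^ 4 * T * Dl <= 0.
Proof.
  intros Hg Hm HM HT HD HP HE HZ Hy Hb HZb HU.
  (* [(a - b - y)^2 <= 3 a^2 + 3 b^2 + 3 y^2]: the first two terms are absorbed by [U'],
     the last one by the bound on [Zz] *)
  set (K := 1 + m * M ^ 2). set (N := 1 + m * P).
  assert (HN1 : 1 <= N) by (unfold N; nra).
  assert (HNK : N <= K) by (unfold N, K; nra).
  assert (Hsq : (a - b - y) ^ 2 <= 3 * a ^ 2 + 3 * b ^ 2 + 3 * y ^ 2).
  { pose proof (pow2_ge_0 (a + b)). pose proof (pow2_ge_0 (a + y)). pose proof (pow2_ge_0 (b - y)). nra. }
  assert (Hb2 : b ^ 2 <= M ^ 2 * E) by (apply Rle_trans with (P * E); auto; apply Rmult_le_compat_r; lra).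
  assert (Hy2 : y ^ 2 <= M ^ 2 * Zz) by (apply Rle_trans with (P * Zz); auto; apply Rmult_le_compat_r; lra).
  assert (HM2 : 0 < M ^ 2) by (apply pow_lt; lra).
  assert (HZ2 : M ^ 2 * Zz <= 3 * g * M ^ 4 * T * Dl).
  { replace (3 * g * M ^ 4 * T * Dl) with (M ^ 2 * (3 * g * M ^ 2 * T * Dl)) by ring.
    apply Rmult_le_compat_l; lra. }
  assert (HK : 0 < K) by lra.
  assert (HU' : 3 * K ^ 2 / g * U' <= - (3 * K ^ 2 / N) * a ^ 2 - (12 * K ^ 2 / (m * N)) * E).
  { assert (0 <= 3 * K ^ 2 / g) by (apply Rlt_le, Rdiv_lt_0_compat; [nra|lra]).
    apply Rle_trans with (3 * K ^ 2 / g * (- (g / N) * a ^ 2 - (4 * g / (m * N)) * E)).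
    apply Rmult_le_compat_l; auto.
    right. field. split; [lra|]. split; lra. }
  assert (Ha2 : 3 * a ^ 2 <= 3 * K ^ 2 / N * a ^ 2).
  { apply Rmult_le_compat_r; [apply pow2_ge_0|].
    apply Rmult_le_reg_r with N; [lra|]. replace (3 * K ^ 2 / N * N) with (3 * K ^ 2) by (field; lra). nra. }
  assert (HE2 : 3 * M ^ 2 * E <= 12 * K ^ 2 / (m * N) * E).
  { apply Rmult_le_compat_r; auto.
    apply Rmult_le_reg_r with (m * N); [nra|]. replace (12 * K ^ 2 / (m * N) * (m * N)) with (12 * K ^ 2) by (field; lra).
    assert (m * M ^ 2 <= K) by (unfold K; lra).
    assert (K <= K * K) by nra. assert (K * N <= K * K) by nra. nra. }
  lra.
Qed.

Section Observer.

Variables (n : nat) (beta gamma mu : R) (phi : R -> nat -> R) (theta_star : nat -> R).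
Hypotheses (Hgamma : 0 < gamma) (Hmu : 0 < mu) (Hbeta : beta >= 2 * gamma / mu).
Hypothesis Hphi : piecewise_continuous n phi.

Definition gain s := gamma / Nt n mu phi s.

Lemma Nt_ge1 s : 1 <= Nt n mu phi s.
Proof. unfold Nt. pose proof (dotn_ge0 n (phi s)). nra. Qed.

Lemma gain_pos s : 0 < gain s.
Proof. unfold gain. pose proof (Nt_ge1 s). apply Rdiv_lt_0_compat; lra. Qed.

Lemma continuous_Icc_gain a b t :
  (forall j, (j < n)%nat -> continuous_Icc (fun s => phi s j) a b t) ->
  continuous_Icc gain a b t.
Proof.
  intros H. unfold gain, Rdiv. apply continuous_Icc_mult; [apply continuous_Icc_const|].
  apply (continuous_Icc_comp Rinv (Nt n mu phi)).
  - apply continuous_Rinv. pose proof (Nt_ge1 t). lra.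
  - unfold Nt. apply continuous_Icc_plus; [apply continuous_Icc_const|].
    apply continuous_Icc_mult; [apply continuous_Icc_const|]. now apply continuous_Icc_dotn.
Qed.

Lemma deriv_nonpos_phi_continuous_le F a b :
  0 <= a -> a <= b -> (forall tau, a <= tau <= b -> continuous_Icc F a b tau) ->
  (forall tau, a < tau < b -> (forall j, (j < n)%nat -> continuous (fun s => phi s j) tau) ->
     exists l, is_derive F tau l /\ l <= 0) -> F b <= F a.
Proof.
  intros Ha Hab Hc Hd. destruct (Hphi a b Ha Hab) as [D HD].
  apply (deriv_nonpos_except_le F a b D Hab Hc). intros tau Ht Hn. apply Hd; [exact Ht|].
  intros j Hj. apply (HD j Hj tau ltac:(lra)); assumption.
Qed.

Variables (M T delta : R).
Hypothesis Hpe : persistently_exciting n phi M T delta.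

Lemma dotn_phi_le s : 0 <= s -> dotn n (phi s) (phi s) <= M ^ 2.
Proof.
  destruct Hpe as [HM [_ [_ [Hb _]]]]. intros Hs. specialize (Hb s Hs). unfold normn in Hb.
  pose proof (dotn_ge0 n (phi s)). pose proof (sqrt_pos (dotn n (phi s) (phi s))).
  rewrite <- (sqrt_sqrt (dotn n (phi s) (phi s))) by assumption. nra.
Qed.

Lemma Nt_le s : 0 <= s -> Nt n mu phi s <= 1 + mu * M ^ 2.
Proof. intros Hs. unfold Nt. pose proof (dotn_phi_le s Hs). nra. Qed.

Section Solution.

Variables (t0 : R) (x : R -> (nat -> R) * (nat -> R)).
Hypotheses (Ht0 : 0 <= t0) (Hx : is_solution n beta gamma mu phi theta_star t0 x).

Lemma solution_continuous_Icc i a b t : (i < n)%nat -> t0 <= a -> a <= t <= b ->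
  continuous_Icc (fun s => fst (x s) i) a b t /\ continuous_Icc (fun s => snd (x s) i) a b t.
Proof.
  intros Hi Ha Ht. split; apply continuous_Icc_subinterval with t0 b; try lra;
    [apply (continuous_Icc_primitive (fun s => - beta * (fst (x s) i - snd (x s) i)))|
     apply (continuous_Icc_primitive (fun s => - gain s * phi s i *
                      dotn n (phi s) (fun j => fst (x s) j - theta_star j)))];
    try (intros t' Ht'; apply (Hx t' ltac:(lra) i Hi)); lra.
Qed.

Lemma solution_is_derive tau i : t0 < tau -> (i < n)%nat ->
  (forall j, (j < n)%nat -> continuous (fun s => phi s j) tau) ->
  is_derive (fun s => fst (x s) i) tau (- beta * (fst (x tau) i - snd (x tau) i)) /\
  is_derive (fun s => snd (x s) i) tau
     (- gain tau * phi tau i * dotn n (phi tau) (fun j => fst (x tau) j - theta_star j)).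
Proof.
  intros Htau Hi Hp.
  assert (Hcx : forall j, (j < n)%nat -> continuous_Icc (fun s => fst (x s) j) t0 (tau + 1) tau /\
                                         continuous_Icc (fun s => snd (x s) j) t0 (tau + 1) tau)
    by (intros j Hj; apply solution_continuous_Icc; auto; lra).
  split.
  - apply (is_derive_primitive (fun s => - beta * (fst (x s) i - snd (x s) i)) _ t0 (tau + 1)).
    + intros t Ht. apply (Hx t ltac:(lra) i Hi).
    + lra.
    + apply (continuous_Icc_interior _ t0 (tau + 1)); [lra|].
      apply continuous_Icc_mult; [apply continuous_Icc_const|].
      apply continuous_Icc_minus; [apply (proj1 (Hcx i Hi))|apply (proj2 (Hcx i Hi))].
  - apply (is_derive_primitive (fun s => - gain s * phi s i *
                      dotn n (phi s) (fun j => fst (x s) j - theta_star j)) _ t0 (tau + 1)).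
    + intros t Ht. apply (Hx t ltac:(lra) i Hi).
    + lra.
    + apply (continuous_Icc_interior _ t0 (tau + 1)); [lra|].
      assert (Hpc : forall j, (j < n)%nat -> continuous_Icc (fun s => phi s j) t0 (tau + 1) tau)
        by (intros; now apply continuous_Icc_of_continuous, Hp).
      apply continuous_Icc_mult; [apply continuous_Icc_mult|].
      * apply continuous_Icc_opp, continuous_Icc_gain, Hpc.
      * apply Hpc, Hi.
      * apply continuous_Icc_dotn; [exact Hpc|]. intros j Hj.
        apply continuous_Icc_minus; [apply (proj1 (Hcx j Hj))|apply continuous_Icc_const].
Qed.

Definition theta_err s i := fst (x s) i - theta_star i.
Definition vartheta_err s i := snd (x s) i - theta_star i.
Definition gap s i := fst (x s) i - snd (x s) i.
Definition pred_err s := dotn n (phi s) (theta_err s).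
Definition vartheta_drift s tau i := vartheta_err tau i - vartheta_err s i.

Definition lyap s := dotn n (vartheta_err s) (vartheta_err s) + dotn n (gap s) (gap s).

Definition lyap_rate s :=
  -2 * gain s * pred_err s ^ 2 + 4 * gain s * pred_err s * dotn n (phi s) (gap s)
  - 2 * beta * dotn n (gap s) (gap s).

Section Derivatives.

Variable tau : R.
Hypotheses (Htau : t0 < tau) (Hp : forall j, (j < n)%nat -> continuous (fun s => phi s j) tau).

Lemma vartheta_err_is_derive i : (i < n)%nat ->
  is_derive (fun s => vartheta_err s i) tau (- gain tau * pred_err tau * phi tau i).
Proof.
  intros Hi. eapply is_derive_eq.
  - apply (is_derive_plus (fun s => snd (x s) i) (fun _ => - theta_star i)).
    + apply (proj2 (solution_is_derive tau i Htau Hi Hp)).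
    + apply is_derive_const.
  - cbv [plus zero]; simpl. unfold pred_err, theta_err. ring.
Qed.

Lemma vartheta_drift_is_derive s i : (i < n)%nat ->
  is_derive (fun t => vartheta_drift s t i) tau (- gain tau * pred_err tau * phi tau i).
Proof.
  intros Hi. eapply is_derive_eq.
  - apply (is_derive_plus (fun t => vartheta_err t i) (fun _ => - vartheta_err s i)).
    + apply vartheta_err_is_derive, Hi.
    + apply is_derive_const.
  - cbv [plus zero]; simpl. ring.
Qed.

Lemma gap_is_derive i : (i < n)%nat ->
  is_derive (fun s => gap s i) tau
    (- beta * gap tau i - (- gain tau * pred_err tau) * phi tau i).
Proof.
  intros Hi. eapply is_derive_eq.
  - apply (is_derive_minus (fun s => fst (x s) i) (fun s => snd (x s) i)).
    + apply (proj1 (solution_is_derive tau i Htau Hi Hp)).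
    + apply (proj2 (solution_is_derive tau i Htau Hi Hp)).
  - cbv [minus plus opp]; simpl. unfold pred_err, theta_err, gap. ring.
Qed.

Lemma lyap_is_derive : is_derive lyap tau (lyap_rate tau).
Proof.
  eapply is_derive_eq.
  - apply (is_derive_plus (fun s => dotn n (vartheta_err s) (vartheta_err s))
                          (fun s => dotn n (gap s) (gap s))).
    + apply is_derive_dotn; apply vartheta_err_is_derive.
    + apply is_derive_dotn; apply gap_is_derive.
  - assert (Hvg : dotn n (phi tau) (vartheta_err tau) = pred_err tau - dotn n (phi tau) (gap tau)).
    { unfold pred_err. rewrite <- dotn_minus_r. apply dotn_ext; [easy|].
      intros i _. unfold vartheta_err, theta_err, gap. ring. }
    cbv [plus]; simpl.
    rewrite (dotn_comm n (vartheta_err tau)), (dotn_comm n (gap tau)), dotn_minus_l, !dotn_scal_l, Hvg.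
    unfold lyap_rate. ring.
Qed.

End Derivatives.

Lemma lyap_rate_le s : lyap_rate s <=
  - gain s * pred_err s ^ 2 - 4 * gamma / (mu * Nt n mu phi s) * dotn n (gap s) (gap s).
Proof.
  unfold lyap_rate, gain, Nt.
  apply (normalized_dissipation_le gamma mu beta (dotn n (phi s) (phi s)) (dotn n (gap s) (gap s)));
    [assumption..|apply dotn_ge0|apply dotn_ge0|apply dotn_Cauchy_Schwarz].
Qed.

Lemma lyap_rate_le_pred_err s : lyap_rate s <= - gain s * pred_err s ^ 2.
Proof.
  eapply Rle_trans; [apply lyap_rate_le|].
  pose proof (Nt_ge1 s). pose proof (dotn_ge0 n (gap s)).
  assert (0 <= 4 * gamma / (mu * Nt n mu phi s) * dotn n (gap s) (gap s))
    by (apply Rmult_le_pos; [apply Rlt_le, Rdiv_lt_0_compat; nra|lra]).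
  lra.
Qed.

Lemma lyap_rate_nonpos s : lyap_rate s <= 0.
Proof.
  eapply Rle_trans; [apply lyap_rate_le_pred_err|].
  pose proof (gain_pos s). pose proof (pow2_ge_0 (pred_err s)).
  assert (0 <= gain s * pred_err s ^ 2) by (apply Rmult_le_pos; lra).
  lra.
Qed.

Lemma continuous_Icc_errors i a b t : (i < n)%nat -> t0 <= a -> a <= t <= b ->
  continuous_Icc (fun s => vartheta_err s i) a b t /\ continuous_Icc (fun s => gap s i) a b t.
Proof.
  intros Hi Ha Ht. destruct (solution_continuous_Icc i a b t Hi Ha Ht) as [H1 H2].
  split; apply continuous_Icc_minus; auto using continuous_Icc_const.
Qed.

Lemma continuous_Icc_lyap a b t : t0 <= a -> a <= t <= b -> continuous_Icc lyap a b t.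
Proof.
  intros Ha Ht. unfold lyap.
  apply continuous_Icc_plus; apply continuous_Icc_dotn; intros i Hi;
    apply (continuous_Icc_errors i a b t Hi Ha Ht).
Qed.

Lemma lyap_nonincreasing s t : t0 <= s -> s <= t -> lyap t <= lyap s.
Proof.
  intros Hs Hst. apply deriv_nonpos_phi_continuous_le; [lra|lra| |].
  - intros tau Htau. apply continuous_Icc_lyap; lra.
  - intros tau Htau Hp. exists (lyap_rate tau).
    split; [apply lyap_is_derive; auto; lra|apply lyap_rate_nonpos].
Qed.

(** * Decrease of the Lyapunov function over an excitation window *)

(* The exponential weight contributes a damping term [- |z|^2 / T] to the derivative,
   which absorbs the cross term produced by [z' = - gain * pred_err * phi]. *)
Definition drift_energy s tau :=
  exp (- (tau - s) / T) * dotn n (vartheta_drift s tau) (vartheta_drift s tau)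
  + gamma * M ^ 2 * T * lyap tau.

Lemma continuous_Icc_drift_energy s a b tau : t0 <= a -> a <= tau <= b ->
  continuous_Icc (drift_energy s) a b tau.
Proof.
  intros Ha Htau. unfold drift_energy. apply continuous_Icc_plus; apply continuous_Icc_mult.
  - apply (continuous_Icc_comp exp (fun tau => - (tau - s) / T)); [apply continuous_exp|].
    unfold Rdiv. apply continuous_Icc_mult; [|apply continuous_Icc_const].
    apply continuous_Icc_opp, continuous_Icc_minus; [apply continuous_Icc_id|apply continuous_Icc_const].
  - apply continuous_Icc_dotn; intros i Hi; apply continuous_Icc_minus;
      solve [apply continuous_Icc_const|apply (continuous_Icc_errors i a b tau Hi Ha Htau)].
  - apply continuous_Icc_const.
  - apply continuous_Icc_lyap; assumption.
Qed.

Lemma drift_energy_rate_nonpos s tau : t0 <= s -> s < tau ->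
  (forall j, (j < n)%nat -> continuous (fun y => phi y j) tau) ->
  exists l, is_derive (drift_energy s) tau l /\ l <= 0.
Proof.
  destruct Hpe as [HM [HT _]]. intros Hs Htau Hp.
  set (ex := exp (- (tau - s) / T)). set (z := vartheta_drift s tau).
  set (y := dotn n (phi tau) z).
  exists (ex * (- (1 / T) * dotn n z z - 2 * gain tau * pred_err tau * y)
          + gamma * M ^ 2 * T * lyap_rate tau).
  split.
  - assert (Dex : is_derive (fun t => exp (- (t - s) / T)) tau (ex * (- 1 / T))).
    { unfold ex. auto_derive; [exact I|]. unfold Rminus, Rdiv. ring. }
    eapply is_derive_eq.
    + apply (is_derive_plus (fun t => exp (- (t - s) / T) * dotn n (vartheta_drift s t) (vartheta_drift s t))
               (fun t => gamma * M ^ 2 * T * lyap t)).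
      * apply (is_derive_mult (fun t => exp (- (t - s) / T))); [exact Dex| |intros; apply Rmult_comm].
        apply is_derive_dotn; intros i Hi; apply (vartheta_drift_is_derive tau ltac:(lra) Hp s i Hi).
      * apply (is_derive_scal lyap), lyap_is_derive; [lra|exact Hp].
    + cbv [plus mult scal]; simpl. fold ex z.
      rewrite dotn_scal_l, dotn_scal_r, (dotn_comm n z (phi tau)). fold y.
      unfold Rdiv. ring.
  - apply (drift_rate_nonpos ex (dotn n z z) y (dotn n (phi tau) (phi tau)) M T (gain tau) gamma (pred_err tau)).
    + split; [apply exp_pos|]. unfold ex. rewrite <- exp_0. apply exp_le_compat.
      apply Ropp_le_cancel. rewrite Ropp_0, Rdiv_opp_l, Ropp_involutive.
      apply Rmult_le_pos; [lra|apply Rlt_le, Rinv_0_lt_compat; lra].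
    + apply dotn_ge0.
    + unfold y. rewrite Rmult_comm, (dotn_comm n (phi tau)). apply dotn_Cauchy_Schwarz.
    + split; [apply dotn_ge0|apply dotn_phi_le; lra].
    + exact HM.
    + exact HT.
    + split; [apply gain_pos|]. unfold gain.
      pose proof (Nt_ge1 tau). apply Rle_div_l; [lra|]. nra.
    + apply lyap_rate_le_pred_err.
Qed.

Lemma vartheta_drift_le s t : t0 <= s -> s <= t <= s + T ->
  dotn n (vartheta_drift s t) (vartheta_drift s t)
  <= 3 * gamma * M ^ 2 * T * (lyap s - lyap t).
Proof.
  destruct Hpe as [_ [HT _]]. intros Hs Ht.
  assert (HF : drift_energy s t <= drift_energy s s).
  { apply deriv_nonpos_phi_continuous_le; [lra|lra| |].
    - intros tau Htau. apply continuous_Icc_drift_energy; lra.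
    - intros tau Htau Hp. apply drift_energy_rate_nonpos; [exact Hs|lra|exact Hp]. }
  unfold drift_energy in HF.
  replace (dotn n (vartheta_drift s s) (vartheta_drift s s)) with 0 in HF
    by (rewrite <- (dotn_0_l n (vartheta_drift s s)); apply dotn_ext; intros; unfold vartheta_drift; ring).
  replace (- (s - s) / T) with 0 in HF by (field; lra). rewrite exp_0 in HF.
  assert (Hex : / 3 <= exp (- (t - s) / T)).
  { unfold Rdiv. rewrite <- Ropp_mult_distr_l. apply exp_opp_ge_third.
    apply Rmult_le_reg_r with T; [lra|]. rewrite Rmult_assoc, Rinv_l; lra. }
  pose proof (dotn_ge0 n (vartheta_drift s t)). nra.
Qed.

Lemma sqr_dot_vartheta_le s tau : t0 <= s -> s < tau < s + T ->
  (forall j, (j < n)%nat -> continuous (fun y => phi y j) tau) ->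
  (dotn n (phi tau) (vartheta_err s)) ^ 2 + 3 * (1 + mu * M ^ 2) ^ 2 / gamma * lyap_rate tau
  <= 9 * gamma * M ^ 4 * T * (lyap s - lyap (s + T)).
Proof.
  destruct Hpe as [HM [HT _]]. intros Hs Htau Hp.
  set (z := vartheta_drift s tau).
  assert (Hz := vartheta_drift_le s tau Hs ltac:(lra)). fold z in Hz.
  assert (HUt := lyap_nonincreasing tau (s + T) ltac:(lra) ltac:(lra)).
  assert (HDl := lyap_nonincreasing s (s + T) Hs ltac:(lra)).
  assert (Hv : dotn n (phi tau) (vartheta_err s)
               = pred_err tau - dotn n (phi tau) (gap tau) - dotn n (phi tau) z).
  { unfold pred_err. rewrite <- !dotn_minus_r. apply dotn_ext; [easy|].
    intros i _. unfold z, vartheta_drift, vartheta_err, theta_err, gap. ring. }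
  rewrite Hv.
  enough (H : (pred_err tau - dotn n (phi tau) (gap tau) - dotn n (phi tau) z) ^ 2
    + 3 * (1 + mu * M ^ 2) ^ 2 / gamma * lyap_rate tau
    - 9 * gamma * M ^ 4 * T * (lyap s - lyap (s + T)) <= 0) by lra.
  apply (excitation_rate_nonpos gamma mu M T (lyap s - lyap (s + T)) (dotn n (phi tau) (phi tau))
           (dotn n (gap tau) (gap tau)) (dotn n z z) (pred_err tau) (dotn n (phi tau) (gap tau))
           (dotn n (phi tau) z) (lyap_rate tau));
    [exact Hgamma|exact Hmu|exact HM|exact HT|lra| | | | | | |].
  - split; [apply dotn_ge0|apply dotn_phi_le; lra].
  - apply dotn_ge0.
  - apply dotn_ge0.
  - apply dotn_Cauchy_Schwarz.
  - apply dotn_Cauchy_Schwarz.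
  - eapply Rle_trans; [exact Hz|]. apply Rmult_le_compat_l; [|lra].
    apply Rmult_le_pos; [|lra]. pose proof (pow2_ge_0 M). nra.
  - apply lyap_rate_le.
Qed.

Definition excitation_const := 3 * (1 + mu * M ^ 2) ^ 2 / gamma + 9 * gamma * M ^ 4 * T ^ 2.

Lemma excitation_le s : t0 <= s ->
  delta * dotn n (vartheta_err s) (vartheta_err s) <= excitation_const * (lyap s - lyap (s + T)).
Proof.
  destruct Hpe as [HM [HT [Hd [_ Hexc]]]]. intros Hs.
  set (v := vartheta_err s). set (Dl := lyap s - lyap (s + T)).
  set (h y := (dotn n (phi y) v) ^ 2).
  set (C1 := 3 * (1 + mu * M ^ 2) ^ 2 / gamma).
  destruct (piecewise_continuous_sqr_dot n phi v s (s + T) Hphi ltac:(lra) ltac:(lra))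
    as [D [Hpch Hcont]].
  assert (Hi : ex_RInt h s (s + T)) by (apply (ex_RInt_piecewise_continuous h s (s + T) D); [lra|exact Hpch]).
  assert (Hprim := is_RInt_primitive h s (s + T) ltac:(lra) Hi).
  set (K := 9 * gamma * M ^ 4 * T * Dl).
  (* [G] is nonincreasing: this integrates [sqr_dot_vartheta_le] over the window *)
  set (G tau := RInt h s tau + (C1 * lyap tau + K * (s - tau))).
  assert (HG : G (s + T) <= G s).
  { apply (deriv_nonpos_except_le G s (s + T) D); [lra| |].
    - intros tau Htau. unfold G. apply continuous_Icc_plus; [apply continuous_Icc_primitive with h; auto|].
      apply continuous_Icc_plus; apply continuous_Icc_mult; try apply continuous_Icc_const.
      + apply continuous_Icc_lyap; lra.
      + apply continuous_Icc_minus; [apply continuous_Icc_const|apply continuous_Icc_id].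
    - intros tau Htau Hn. specialize (Hcont tau Htau Hn).
      exists (h tau + (C1 * lyap_rate tau + - K)). split.
      + apply (is_derive_plus (fun tau => RInt h s tau) (fun tau => C1 * lyap tau + K * (s - tau))).
        * apply (is_derive_primitive h _ s (s + T)); [exact Hprim|lra|].
          apply (continuous_Icc_interior _ (tau - 1) (tau + 1)); [lra|].
          apply (continuous_Icc_comp (fun w => w ^ 2) (fun y => dotn n (phi y) v)); [apply continuous_sqr|].
          apply continuous_Icc_dotn; intros j Hj; [|apply continuous_Icc_const].
          apply continuous_Icc_of_continuous, Hcont, Hj.
        * apply (is_derive_plus (fun tau => C1 * lyap tau) (fun tau => K * (s - tau))).
          -- apply (is_derive_scal lyap), lyap_is_derive; [lra|exact Hcont].
          -- auto_derive; [exact I|ring].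
      + unfold h, v, K, Dl, C1. pose proof (sqr_dot_vartheta_le s tau Hs Htau Hcont). lra. }
  unfold G in HG. rewrite RInt_point in HG. change (zero : R) with 0 in HG.
  assert (HPEs := Hexc s ltac:(lra) v). fold h in HPEs.
  replace (s - s) with 0 in HG by ring.
  unfold excitation_const. fold C1. fold Dl.
  replace ((C1 + 9 * gamma * M ^ 4 * T ^ 2) * Dl)
    with (C1 * (lyap s - lyap (s + T)) + K * (s + T - s)) by (unfold K, Dl; ring).
  lra.
Qed.

Lemma lyap_rate_dominates_gap s : 0 <= s ->
  mu * (1 + mu * M ^ 2) / (4 * gamma) * lyap_rate s <= - dotn n (gap s) (gap s).
Proof.
  intros Hs. pose proof (Nt_ge1 s). pose proof (Nt_le s Hs).
  pose proof (dotn_ge0 n (gap s)). pose proof (pow2_ge_0 (pred_err s)). pose proof (gain_pos s).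
  set (c := mu * (1 + mu * M ^ 2) / (4 * gamma)).
  assert (Hc : 0 <= c) by (unfold c; apply Rlt_le, Rdiv_lt_0_compat; nra).
  (* [c] is chosen so that [c * 4 gamma / (mu N_s) = (1 + mu M^2) / N_s >= 1] *)
  assert (HcN : 1 <= c * (4 * gamma / (mu * Nt n mu phi s))).
  { replace (c * (4 * gamma / (mu * Nt n mu phi s))) with ((1 + mu * M ^ 2) / Nt n mu phi s)
      by (unfold c; field; lra).
    apply Rle_div_r; lra. }
  apply Rle_trans with (c * (- gain s * pred_err s ^ 2
                           - 4 * gamma / (mu * Nt n mu phi s) * dotn n (gap s) (gap s))).
  - apply Rmult_le_compat_l; [exact Hc|apply lyap_rate_le].
  - assert (0 <= c * gain s * pred_err s ^ 2) by (apply Rmult_le_pos; [apply Rmult_le_pos|]; lra).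
    nra.
Qed.

Lemma lyap_window_rate s tau : t0 <= s -> s < tau < s + T ->
  (forall j, (j < n)%nat -> continuous (fun y => phi y j) tau) ->
  lyap tau + mu * (1 + mu * M ^ 2) / (4 * gamma) * lyap_rate tau
  <= (2 * excitation_const / delta + 6 * gamma * M ^ 2 * T) * (lyap s - lyap (s + T)).
Proof.
  destruct Hpe as [HM [HT [Hd _]]]. intros Hs Htau Hp.
  set (Dl := lyap s - lyap (s + T)). set (v := vartheta_err s). set (z := vartheta_drift s tau).
  assert (HUt := lyap_nonincreasing tau (s + T) ltac:(lra) ltac:(lra)).
  assert (Hvt : dotn n (vartheta_err tau) (vartheta_err tau) <= 2 * dotn n v v + 2 * dotn n z z).
  { eapply Rle_trans; [|apply (dotn_sq_plus_le n v z)]. right.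
    apply dotn_ext; intros; unfold z, v, vartheta_drift; ring. }
  assert (Hv : dotn n v v <= excitation_const / delta * Dl).
  { apply Rmult_le_reg_l with delta; [exact Hd|].
    replace (delta * (excitation_const / delta * Dl)) with (excitation_const * Dl) by (field; lra).
    apply excitation_le, Hs. }
  assert (Hz : dotn n z z <= 3 * gamma * M ^ 2 * T * Dl).
  { eapply Rle_trans; [apply vartheta_drift_le; [exact Hs|lra]|].
    apply Rmult_le_compat_l; [|unfold Dl; lra].
    apply Rmult_le_pos; [|lra]. pose proof (pow2_ge_0 M). nra. }
  pose proof (lyap_rate_dominates_gap tau ltac:(lra)).
  unfold lyap. unfold Rdiv in *. nra.
Qed.

Definition window_const :=
  2 * excitation_const / delta + 6 * gamma * M ^ 2 * T + mu * (1 + mu * M ^ 2) / (4 * gamma) / T.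

Lemma window_const_ge0 : 0 <= window_const.
Proof.
  destruct Hpe as [HM [HT [Hd _]]]. unfold window_const, excitation_const.
  pose proof (pow2_ge_0 M). pose proof (pow2_ge_0 T).
  assert (0 <= M ^ 4) by (replace (M ^ 4) with ((M ^ 2) ^ 2) by ring; apply pow2_ge_0).
  assert (0 <= 3 * (1 + mu * M ^ 2) ^ 2 / gamma) by (apply Rlt_le, Rdiv_lt_0_compat; nra).
  assert (0 <= 9 * gamma * M ^ 4 * T ^ 2) by (repeat apply Rmult_le_pos; lra).
  assert (0 <= 2 * (3 * (1 + mu * M ^ 2) ^ 2 / gamma + 9 * gamma * M ^ 4 * T ^ 2) / delta)
    by (apply Rmult_le_pos; [lra|apply Rlt_le, Rinv_0_lt_compat; lra]).
  assert (0 <= 6 * gamma * M ^ 2 * T) by (repeat apply Rmult_le_pos; lra).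
  assert (0 <= mu * (1 + mu * M ^ 2) / (4 * gamma) / T)
    by (apply Rlt_le; repeat apply Rdiv_lt_0_compat; nra).
  lra.
Qed.

Lemma lyap_window s : t0 <= s -> lyap (s + T) <= window_const * (lyap s - lyap (s + T)).
Proof.
  destruct Hpe as [HM [HT [Hd _]]]. intros Hs.
  set (c := mu * (1 + mu * M ^ 2) / (4 * gamma)).
  set (K := (2 * excitation_const / delta + 6 * gamma * M ^ 2 * T) * (lyap s - lyap (s + T))).
  (* as [((tau - s) V)' = V + (tau - s) V'] and [V' <= 0], integrating [lyap_window_rate]
     yields [T V(s + T) <= K T + c (V(s) - V(s + T))] *)
  set (Q tau := (tau - s) * lyap tau + (c * lyap tau + K * (s - tau))).
  assert (HQ : Q (s + T) <= Q s).
  { apply deriv_nonpos_phi_continuous_le; [lra|lra| |].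
    - intros tau Htau. unfold Q.
      assert (HU := continuous_Icc_lyap s (s + T) tau Hs Htau).
      apply continuous_Icc_plus; [apply continuous_Icc_mult; [|exact HU]|].
      + apply continuous_Icc_minus; [apply continuous_Icc_id|apply continuous_Icc_const].
      + apply continuous_Icc_plus; apply continuous_Icc_mult; try apply continuous_Icc_const; [exact HU|].
        apply continuous_Icc_minus; [apply continuous_Icc_const|apply continuous_Icc_id].
    - intros tau Htau Hp.
      assert (DU := lyap_is_derive tau ltac:(lra) Hp).
      exists (lyap tau + (tau - s) * lyap_rate tau + (c * lyap_rate tau + - K)). split.
      + eapply is_derive_eq.
        * apply (is_derive_plus (fun tau => (tau - s) * lyap tau) (fun tau => c * lyap tau + K * (s - tau))).
          -- apply (is_derive_mult (fun tau => tau - s) lyap); [|exact DU|intros; apply Rmult_comm].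
             auto_derive; reflexivity.
          -- apply (is_derive_plus (fun tau => c * lyap tau) (fun tau => K * (s - tau))).
             ++ apply (is_derive_scal lyap), DU.
             ++ auto_derive; [exact I|reflexivity].
        * cbv [plus mult scal]; simpl. ring.
      + assert (Htv : (tau - s) * lyap_rate tau <= 0)
          by (apply Rmult_le_0_l; [lra|apply lyap_rate_nonpos]).
        assert (Hw := lyap_window_rate s tau Hs Htau Hp). fold c K in Hw. lra. }
  unfold Q in HQ. replace (s - s) with 0 in HQ by ring. replace (s + T - s) with T in HQ by ring.
  replace (s - (s + T)) with (- T) in HQ by ring.
  apply Rmult_le_reg_l with T; [exact HT|].
  replace (T * (window_const * (lyap s - lyap (s + T))))
    with (K * T + c * (lyap s - lyap (s + T))) by (unfold K, c, window_const; field; lra).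
  lra.
Qed.

Definition contraction_rate := window_const / (1 + window_const).

Lemma contraction_rate_bounds : 0 <= contraction_rate < 1.
Proof.
  pose proof window_const_ge0. unfold contraction_rate. split.
  - apply Rmult_le_pos; [lra|apply Rlt_le, Rinv_0_lt_compat; lra].
  - apply Rmult_lt_reg_r with (1 + window_const); [lra|].
    unfold Rdiv. rewrite Rmult_assoc, Rinv_l; lra.
Qed.

Lemma lyap_contraction s : t0 <= s -> lyap (s + T) <= contraction_rate * lyap s.
Proof.
  intros Hs. pose proof window_const_ge0. pose proof (lyap_window s Hs).
  unfold contraction_rate. apply Rmult_le_reg_l with (1 + window_const); [lra|].
  replace ((1 + window_const) * (window_const / (1 + window_const) * lyap s))
    with (window_const * lyap s) by (field; lra).
  lra.
Qed.

Lemma lyap_geometric_decay k t :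
  t0 + INR k * T <= t -> lyap t <= contraction_rate ^ k * lyap t0.
Proof.
  destruct Hpe as [_ [HT _]]. pose proof contraction_rate_bounds as [Hq0 _]. intros Ht.
  eapply Rle_trans; [apply (lyap_nonincreasing (t0 + INR k * T) t); [pose proof (pos_INR k); nra|exact Ht]|].
  clear t Ht. induction k as [|k IH].
  - simpl. rewrite Rmult_0_l, Rplus_0_r, Rmult_1_l. apply Rle_refl.
  - rewrite S_INR. replace (t0 + (INR k + 1) * T) with (t0 + INR k * T + T) by ring.
    eapply Rle_trans; [apply lyap_contraction; pose proof (pos_INR k); nra|].
    simpl. rewrite Rmult_assoc. apply Rmult_le_compat_l; assumption.
Qed.

Lemma dist_eq_sqr t : dist_eq n theta_star (x t) ^ 2
  = dotn n (theta_err t) (theta_err t) + dotn n (vartheta_err t) (vartheta_err t).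
Proof.
  unfold dist_eq. rewrite <- Rsqr_pow2, Rsqr_sqrt; [reflexivity|].
  apply Rplus_le_le_0_compat; apply dotn_ge0.
Qed.

(* both sides are within a factor 3 since [theta_err = vartheta_err + gap] *)
Lemma lyap_equiv_dist t :
  lyap t <= 3 * dist_eq n theta_star (x t) ^ 2 /\ dist_eq n theta_star (x t) ^ 2 <= 3 * lyap t.
Proof.
  rewrite dist_eq_sqr. unfold lyap.
  pose proof (dotn_ge0 n (theta_err t)). pose proof (dotn_ge0 n (vartheta_err t)).
  pose proof (dotn_ge0 n (gap t)).
  assert (Hg := dotn_sq_minus_le n (theta_err t) (vartheta_err t)).
  assert (Ht := dotn_sq_plus_le n (vartheta_err t) (gap t)).
  replace (dotn n (fun i => theta_err t i - vartheta_err t i) (fun i => theta_err t i - vartheta_err t i))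
    with (dotn n (gap t) (gap t)) in Hg
    by (apply dotn_ext; intros; unfold gap, theta_err, vartheta_err; ring).
  replace (dotn n (fun i => vartheta_err t i + gap t i) (fun i => vartheta_err t i + gap t i))
    with (dotn n (theta_err t) (theta_err t)) in Ht
    by (apply dotn_ext; intros; unfold gap, theta_err, vartheta_err; ring).
  split; lra.
Qed.

Lemma dist_eq_geometric_decay k t : t0 + INR k * T <= t ->
  dist_eq n theta_star (x t) ^ 2 <= 3 ^ 2 * contraction_rate ^ k * dist_eq n theta_star (x t0) ^ 2.
Proof.
  intros Ht. pose proof contraction_rate_bounds as [Hq0 _].
  assert (Hqk : 0 <= contraction_rate ^ k) by (apply pow_le, Hq0).
  destruct (lyap_equiv_dist t) as [_ Hdist]. destruct (lyap_equiv_dist t0) as [Hlyap0 _].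
  pose proof (lyap_geometric_decay k t Ht).
  assert (contraction_rate ^ k * lyap t0 <= contraction_rate ^ k * (3 * dist_eq n theta_star (x t0) ^ 2))
    by (apply Rmult_le_compat_l; assumption).
  lra.
Qed.

End Solution.
End Observer.

(** * Uniform global asymptotic stability *)

Lemma UGAS_of_geometric_decay {X : Type} (sol : R -> (R -> X) -> Prop) (d : X -> R) (C q T : R) :
  (forall z, 0 <= d z) -> 0 < C -> 0 <= q < 1 -> 0 <= T ->
  (forall t0 x, 0 <= t0 -> sol t0 x -> forall k t, t0 + INR k * T <= t ->
     d (x t) ^ 2 <= C ^ 2 * q ^ k * d (x t0) ^ 2) ->
  UGAS sol d.
Proof.
  intros Hd HC Hq HT Hdec.
  assert (Hstab : forall t0 x, 0 <= t0 -> sol t0 x -> forall t, t0 <= t -> d (x t) <= C * d (x t0)).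
  { intros t0 x H0 Hx t Ht. assert (H := Hdec t0 x H0 Hx 0%nat t ltac:(simpl; lra)).
    pose proof (Hd (x t0)). simpl in H.
    destruct (Rle_or_lt (d (x t)) (C * d (x t0))) as [|Hlt]; [assumption|exfalso].
    assert (C * d (x t0) * (C * d (x t0)) < d (x t) * d (x t)) by (apply Rmult_le_0_lt_compat; nra).
    nra. }
  split; [|split].
  - intros eps He. exists (eps / C). split; [apply Rdiv_lt_0_compat; lra|].
    intros t0 x H0 Hx Hx0 t Ht. pose proof (Hstab t0 x H0 Hx t Ht).
    apply Rmult_lt_compat_l with (r := C) in Hx0; [|exact HC].
    replace (C * (eps / C)) with eps in Hx0 by (field; lra). lra.
  - intros r Hr. exists (C * r). split; [nra|].
    intros t0 x H0 Hx Hx0 t Ht. pose proof (Hstab t0 x H0 Hx t Ht). nra.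
  - intros r eps Hr He.
    assert (Hb : 0 < eps ^ 2 / (C ^ 2 * r ^ 2))
      by (apply Rdiv_lt_0_compat; [|apply Rmult_lt_0_compat]; apply pow_lt; assumption).
    destruct (pow_lt_1_zero q ltac:(rewrite Rabs_right; lra) _ Hb) as [N HN].
    specialize (HN N (Nat.le_refl N)). rewrite Rabs_right in HN by (apply Rle_ge, pow_le; lra).
    exists (INR N * T). split; [apply Rmult_le_pos; [apply pos_INR|exact HT]|].
    intros t0 x H0 Hx Hx0 t Ht. assert (H := Hdec t0 x H0 Hx N t Ht).
    pose proof (Hd (x t)). pose proof (Hd (x t0)). pose proof (pow_le q N (proj1 Hq)).
    assert (HCr : 0 < C ^ 2 * r ^ 2) by (apply Rmult_lt_0_compat; apply pow_lt; assumption).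
    assert (HqN : q ^ N * (C ^ 2 * r ^ 2) < eps ^ 2).
    { apply Rmult_lt_compat_r with (r := C ^ 2 * r ^ 2) in HN; [|exact HCr].
      replace (eps ^ 2 / (C ^ 2 * r ^ 2) * (C ^ 2 * r ^ 2)) with (eps ^ 2) in HN by (field; lra).
      exact HN. }
    assert (d (x t) ^ 2 < eps ^ 2).
    { eapply Rle_lt_trans; [exact H|]. eapply Rle_lt_trans; [|exact HqN].
      replace (C ^ 2 * q ^ N * d (x t0) ^ 2) with (q ^ N * (C ^ 2 * d (x t0) ^ 2)) by ring.
      apply Rmult_le_compat_l; [assumption|]. apply Rmult_le_compat_l; [apply pow2_ge_0|nra]. }
    nra.
Qed.

Theorem theorem2 (n : nat) (theta_star : nat -> R) (phi : R -> nat -> R)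
  (M T delta beta gamma mu : R) :
  (1 <= n)%nat ->
  piecewise_continuous n phi ->
  persistently_exciting n phi M T delta ->
  0 < beta -> 0 < gamma -> 0 < mu ->
  beta >= 2 * gamma / mu ->
  UGAS (is_solution n beta gamma mu phi theta_star) (dist_eq n theta_star).
Proof.
  intros _ Hphi Hpe _ Hgamma Hmu Hbeta.
  pose proof Hpe as [_ [HT _]].
  apply (UGAS_of_geometric_decay _ _ 3 (contraction_rate gamma mu M T delta) T).
  - intros z. apply sqrt_pos.
  - lra.
  - exact (contraction_rate_bounds n gamma mu phi Hgamma Hmu M T delta Hpe).
  - lra.
  - intros t0 x Ht0 Hx k t Ht.
    exact (dist_eq_geometric_decay n beta gamma mu phi theta_star Hgamma Hmu Hbeta Hphi
             M T delta Hpe t0 x Ht0 Hx k t Ht).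
Qed.
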